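(* Consider the controlled system $\dot x = f(x)+g(x)u$, $y=h(x)$, with $x\in\mathbb{R}^{d_x}$, $u\in\mathbb{R}^{d_u}$, $y\in\mathbb{R}$, where $f,g,h$ are sufficiently many times differentiable, and let $\mathcal{S}\subset\mathbb{R}^{d_x}$ be open. Suppose that $\mathbf{H}_{d_o}$ is an immersion on $\mathcal{S}$ (e.g. the system is strongly differentially observable of order $d_o$ on $\mathcal{S}$), and that for every $i\in\{1,\dots,d_o\}$ and every $x\in\mathcal{S}$ there exist $L>0$ and a neighborhood $N$ of $x$ such that $$|L_gL_f^{i-1}h(x_a)-L_gL_f^{i-1}h(x_b)|\le L\,|\mathbf{H}_i(x_a)-\mathbf{H}_i(x_b)|\qquad\forall(x_a,x_b)\in N^2.$$ Then the system is uniformly infinitesimally observable on $\mathcal{S}$.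
   Context: $L_f$ is the Lie derivative along $f$, $L_g\alpha$ the row vector of Lie derivatives along the columns of $g$; $\mathbf{H}_i(x)=(h(x),L_fh(x),\dots,L_f^{i-1}h(x))$. Strongly differentially observable of order $d_o$ on $\mathcal{S}$: $\mathbf{H}_{d_o}$ is an injective immersion on $\mathcal{S}$. Uniform infinitesimal observability: consider the lifted system $\dot x=f(x)+g(x)u$, $\dot v=\big[\frac{\partial f}{\partial x}(x)+\frac{\partial (g u)}{\partial x}(x)\big]v$, with outputs $y=h(x)$, $w=\frac{\partial h}{\partial x}(x)v$, $v\in\mathbb{R}^{d_x}$, whose solutions are $(X_u(x,t),V_u((x,v),t))$. The system is uniformly infinitesimally observable on $\mathcal{S}$ if for any $(x,v)\in\mathcal{S}\times(\mathbb{R}^{d_x}\setminus\{0\})$, any $T>0$ and any $C^1$ function $u$ on $[0,T)$, there exists $t<T$ with $\frac{\partial h}{\partial x}(X_u(x,t))\,V_u((x,v),t)\ne0$ and $X_u(x,s)\in\mathcal{S}$ for all $s\le t$. *)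

From HB Require Import structures.
From mathcomp Require Import all_boot all_order all_algebra.
From mathcomp Require Import all_classical all_reals all_analysis.
Set Implicit Arguments. Unset Strict Implicit. Unset Printing Implicit Defensive.
Import Order.TTheory GRing.Theory Num.Theory.
Import numFieldNormedType.Exports.
Local Open Scope ring_scope.
Local Open Scope classical_set_scope.

Section Smoothness.
Variables (R : realType) (n : nat) (W : normedModType R).

Fixpoint Ck (k : nat) (phi : 'rV[R]_n -> W) : Prop :=
  match k with
  | 0 => continuous phi
  | k.+1 => (forall x, differentiable phi x) /\
            forall v : 'rV[R]_n, Ck k (fun x => 'D_v phi x)
  end.

Definition smooth (phi : 'rV[R]_n -> W) : Prop := forall k, Ck k phi.

Definition immersion_on (S : set 'rV[R]_n) (F : 'rV[R]_n -> W) : Prop :=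
  forall x, S x -> differentiable F x /\ (forall v, 'd F x v = 0 -> v = 0).
End Smoothness.

Section Lie.
Variables (R : realType) (dx du : nat).

Definition lie (F : 'rV[R]_dx -> 'rV[R]_dx) (phi : 'rV[R]_dx -> R) : 'rV[R]_dx -> R :=
  fun x => 'D_(F x) phi x.

Definition lieN (F : 'rV[R]_dx -> 'rV[R]_dx) (k : nat) (phi : 'rV[R]_dx -> R) :=
  iter k (lie F) phi.

(* L_g phi : row vector of Lie derivatives along the columns g_1..g_du of g *)
Definition lieG (g : 'I_du -> 'rV[R]_dx -> 'rV[R]_dx) (phi : 'rV[R]_dx -> R)
  : 'rV[R]_dx -> 'rV[R]_du :=
  fun x => \row_(j < du) lie (g j) phi x.

Definition Hmap (f : 'rV[R]_dx -> 'rV[R]_dx) (h : 'rV[R]_dx -> R) (i : nat)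
  : 'rV[R]_dx -> 'rV[R]_i :=
  fun x => \row_(k < i) lieN f k h x.

Definition C1_on_0T (T : R) (u : R -> 'rV[R]_du) : Prop :=
  {within [set t | 0 <= t < T], continuous u} /\
  (forall t, 0 < t < T -> derivable u t 1) /\
  exists du' : R -> 'rV[R]_du,
    {within [set t | 0 <= t < T], continuous du'} /\
    (forall t, 0 < t < T -> 'D_1 u t = du' t).

Definition lifted_solution (f : 'rV[R]_dx -> 'rV[R]_dx)
  (g : 'I_du -> 'rV[R]_dx -> 'rV[R]_dx) (T : R) (u : R -> 'rV[R]_du)
  (x0 v0 : 'rV[R]_dx) (X V : R -> 'rV[R]_dx) : Prop :=
  X 0 = x0 /\ V 0 = v0 /\
  {within [set t | 0 <= t < T], continuous X} /\
  {within [set t | 0 <= t < T], continuous V} /\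
  forall t, 0 < t < T ->
    [/\ derivable X t 1,
        'D_1 X t = f (X t) + \sum_(j < du) (u t) ord0 j *: g j (X t),
        derivable V t 1 &
        'D_1 V t = 'D_(V t) f (X t)
                   + \sum_(j < du) (u t) ord0 j *: 'D_(V t) (g j) (X t)].

(* Uniform infinitesimal observability on S (output y = h(x), w = dh(x) v). *)
Definition unif_inf_observable (f : 'rV[R]_dx -> 'rV[R]_dx)
  (g : 'I_du -> 'rV[R]_dx -> 'rV[R]_dx) (h : 'rV[R]_dx -> R)
  (S : set 'rV[R]_dx) : Prop :=
  forall (x v : 'rV[R]_dx), S x -> v != 0 ->
  forall T : R, 0 < T ->
  forall u : R -> 'rV[R]_du, C1_on_0T T u ->
  forall X V : R -> 'rV[R]_dx, lifted_solution f g T u x v X V ->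
  exists t, [/\ 0 <= t < T, 'D_(V t) h (X t) != 0 &
                forall s, 0 <= s <= t -> S (X s)].
End Lie.

(* If the output derivative w(t) = dh(X t) V t vanished as
   long as X stays in S, then, S being open, it would vanish on some (0, T1) on which
   X stays in S. Along the lifted system, and by the symmetry of second derivatives,
   w_k(t) = d(L_f^k h)(X t) V t satisfies
     w_k' = w_(k+1) + sum_j u_j d(L_(g_j) L_f^k h)(X t) V t.
   If w_0, ..., w_k vanish then dH_(k+1)(X t) V t = 0, and since L_g L_f^k h is
   locally Lipschitz with respect to H_(k+1), its derivative in the direction V t
   vanishes as well; hence w_(k+1) = 0. So dH_(d_o)(X t) V t = 0, the immersion
   property forces V t = 0 on (0, T1), and continuity gives V 0 = 0, contradicting
   V 0 = v <> 0. *)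

From HB Require Import structures.
From mathcomp Require Import all_boot all_order all_algebra.
From mathcomp Require Import all_classical all_reals all_analysis.
From mathcomp Require Import ring.
Set Implicit Arguments. Unset Strict Implicit. Unset Printing Implicit Defensive.
Import Order.TTheory GRing.Theory Num.Theory.
Import numFieldNormedType.Exports.
Local Open Scope ring_scope.
Local Open Scope classical_set_scope.

Section DirectionalDerivative.
Variables (R : realType) (n : nat) (W : normedModType R).
Local Notation E := 'rV[R]_n.
Implicit Types (phi : E -> W) (x a b : E).

Lemma derive_dirD phi x a b : differentiable phi x ->
  'D_(a + b) phi x = 'D_a phi x + 'D_b phi x.
Proof. by move=> dphi; rewrite !deriveE // linearD. Qed.

Lemma derive_dirZ phi x a c : differentiable phi x ->
  'D_(c *: a) phi x = c *: 'D_a phi x.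
Proof. by move=> dphi; rewrite !deriveE // linearZ. Qed.

Lemma derive_dir_sum m phi x (a : 'I_m -> E) : differentiable phi x ->
  'D_(\sum_(j < m) a j) phi x = \sum_(j < m) 'D_(a j) phi x.
Proof.
by move=> dphi; rewrite deriveE // linear_sum; apply: eq_bigr => j _; rewrite deriveE.
Qed.

Lemma derive_dir_basis (psi : E -> R) x v : differentiable psi x ->
  'D_v psi x = \sum_(k < n) v 0 k * 'D_('e_k) psi x.
Proof.
move=> dpsi; rewrite deriveE // {1}(row_sum_delta v) linear_sum.
by apply: eq_bigr => k _; rewrite linearZ /= deriveE.
Qed.

End DirectionalDerivative.

Section Smoothness.
Variables (R : realType) (n : nat).
Local Notation E := 'rV[R]_n.

Lemma CkSW (W : normedModType R) k (phi : E -> W) : Ck k.+1 phi -> Ck k phi.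
Proof.
elim: k phi => [|k IH] phi /= [dphi Dphi]; first by move=> x; exact: differentiable_continuous.
by split=> // v; apply: IH; apply: Dphi.
Qed.

Lemma Ck_cst (W : normedModType R) k (c : W) : Ck k (fun _ : E => c).
Proof.
elim: k c => [|k IH] c /=; first by move=> x; exact: cst_continuous.
split=> [x|v]; first exact: differentiable_cst.
have -> : (fun x => 'D_v (fun _ : E => c) x) = (fun _ => 0).
  by apply/funext => x; rewrite derive_cst.
exact: IH.
Qed.

Lemma CkD (W : normedModType R) k (phi psi : E -> W) : Ck k phi -> Ck k psi ->
  Ck k (fun x => phi x + psi x).
Proof.
elim: k phi psi => [|k IH] phi psi /=.
  by move=> cphi cpsi x; exact: continuousD (cphi x) (cpsi x).
move=> [dphi Dphi] [dpsi Dpsi]; split=> [x|v]; first exact: differentiableD.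
have -> : (fun x => 'D_v (fun y => phi y + psi y) x) = (fun x => 'D_v phi x + 'D_v psi x).
  by apply/funext => x; rewrite -deriveD //; exact: diff_derivable.
exact: IH.
Qed.

Lemma CkM k (phi psi : E -> R) : Ck k phi -> Ck k psi -> Ck k (fun x => phi x * psi x).
Proof.
elim: k phi psi => [|k IH] phi psi /=.
  by move=> cphi cpsi x; exact: continuousM (cphi x) (cpsi x).
move=> [dphi Dphi] [dpsi Dpsi]; split=> [x|v]; first exact: differentiableM.
have -> : (fun x => 'D_v (fun y => phi y * psi y) x) =
          (fun x => phi x * 'D_v psi x + psi x * 'D_v phi x).
  by apply/funext => x; rewrite -deriveM //; exact: diff_derivable.
by apply: CkD; apply: IH => //; apply: CkSW.
Qed.

Lemma Ck_sum (W : normedModType R) k m (F : 'I_m -> E -> W) :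
  (forall i, Ck k (F i)) -> Ck k (fun x => \sum_(i < m) F i x).
Proof.
elim: m F => [|m IH] F CkF.
  under eq_fun do rewrite big_ord0; exact: Ck_cst.
under eq_fun do rewrite big_ord_recr /=.
by apply: CkD => //; apply: IH.
Qed.

Lemma Ck_coord k p (F : E -> 'rV[R]_p) j : Ck k F -> Ck k (fun x => F x 0 j).
Proof.
elim: k F => [|k IH] F /=.
  by move=> cF x; exact: (continuous_comp (cF x) (@coord_continuous R 1 p 0 j (F x))).
move=> [dF DF]; split=> [x|v]; first exact: differentiable_comp (dF x) (differentiable_coord _ 0 j).
have -> : (fun x => 'D_v (fun y => F y 0 j) x) = (fun x => 'D_v F x 0 j).
  by apply/funext => x; rewrite derive_mx ?mxE //; exact: diff_derivable.
exact: IH.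
Qed.

Lemma smooth_differentiable (W : normedModType R) (phi : E -> W) x :
  smooth phi -> differentiable phi x.
Proof. by move=> sphi; case: (sphi 1%N). Qed.

Lemma smooth_derive (W : normedModType R) (phi : E -> W) v :
  smooth phi -> smooth (fun x => 'D_v phi x).
Proof. by move=> sphi k; case: (sphi k.+1) => _; apply. Qed.

Lemma smooth_coord p (F : E -> 'rV[R]_p) j : smooth F -> smooth (fun x => F x 0 j).
Proof. by move=> sF k; apply: Ck_coord. Qed.

Lemma smooth_lie (F : E -> E) (phi : E -> R) : smooth F -> smooth phi -> smooth (lie F phi).
Proof.
move=> sF sphi k.
have -> : lie F phi = (fun x => \sum_(i < n) F x 0 i * 'D_('e_i) phi x).
  by apply/funext => x; rewrite /lie derive_dir_basis //; exact: smooth_differentiable.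
apply: Ck_sum => i; apply: CkM; first exact: smooth_coord.
exact: smooth_derive.
Qed.

Lemma smooth_lieN (F : E -> E) (phi : E -> R) k :
  smooth F -> smooth phi -> smooth (lieN F k phi).
Proof. by move=> sF sphi; elim: k => [|k IH] //=; exact: smooth_lie. Qed.

End Smoothness.

Section SecondDerivatives.
Variables (R : realType) (n : nat).
Local Notation E := 'rV[R]_n.

Lemma derive_along_curve (psi : E -> R) (X : R -> E) t :
  differentiable psi (X t) -> derivable X t 1 ->
  derivable (psi \o X) t 1 /\ 'D_1 (psi \o X) t = 'D_('D_1 X t) psi (X t).
Proof.
move=> dpsi /derivable1_diffP dX.
have dpsiX := differentiable_comp dX dpsi.
split; first exact/derivable1_diffP.
by rewrite !deriveE // diff_comp.
Qed.

Lemma is_derive_line (a c : E) (r : R) : is_derive r 1 (fun s : R => s *: a + c) a.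
Proof.
have dline := is_diffD (@is_diff_scalel R E r a) (@is_diff_cst R R E c r).
have ddline := @ex_diff _ _ _ _ _ _ _ dline.
apply: DeriveDef; first exact: diff_derivable.
by rewrite deriveE // (@diff_val _ _ _ _ _ _ _ dline) /= addr0 scale1r.
Qed.

Lemma is_derive_along_line (psi : E -> R) (a c : E) (r : R) :
  differentiable psi (r *: a + c) ->
  is_derive r 1 (fun s => psi (s *: a + c)) ('D_a psi (r *: a + c)).
Proof.
move=> dpsi; have [dline Dline] := is_derive_line a c r.
have [dcomp Dcomp] := derive_along_curve dpsi dline.
by apply: DeriveDef; [exact: dcomp | rewrite -[LHS]/('D_1 (psi \o _) r) Dcomp Dline].
Qed.

Lemma MVT_line (psi : E -> R) (a c : E) (s : R) : 0 < s ->
  (forall y, differentiable psi y) ->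
  exists2 xi, 0 < xi < s & psi (s *: a + c) - psi c = 'D_a psi (xi *: a + c) * s.
Proof.
move=> s0 dpsi.
have cont : {within `[0, s], continuous (fun r => psi (r *: a + c))}.
  apply: derivable_within_continuous => r _.
  by have [] := is_derive_along_line (dpsi (r *: a + c)).
have [xi xiI] := MVT s0 (fun r _ => is_derive_along_line (dpsi (r *: a + c))) cont.
by rewrite scale0r add0r subr0 => ->; exists xi; rewrite // -in_itv.
Qed.

Lemma second_difference_MVT (phi : E -> R) (a b x : E) (s : R) : 0 < s ->
  (forall y, differentiable phi y) ->
  (forall y, differentiable (fun z => 'D_a phi z) y) ->
  exists xi eta, [/\ 0 < xi < s, 0 < eta < s &
    phi (s *: a + (s *: b + x)) - phi (s *: a + x) - (phi (s *: b + x) - phi x)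
    = 'D_b (fun z => 'D_a phi z) (eta *: b + (xi *: a + x)) * s * s].
Proof.
move=> s0 dphi dDphi.
pose delta r := phi (r *: a + (s *: b + x)) - phi (r *: a + x).
pose ddelta r := 'D_a phi (r *: a + (s *: b + x)) - 'D_a phi (r *: a + x).
have Ddelta (r : R) : is_derive r 1 delta (ddelta r).
  exact: is_deriveB (is_derive_along_line (dphi _)) (is_derive_along_line (dphi _)).
have cont : {within `[0, s], continuous delta}.
  by apply: derivable_within_continuous => r _; have [] := Ddelta r.
have [xi xiI] := MVT s0 (fun r _ => Ddelta r) cont.
rewrite /delta /ddelta scale0r !add0r subr0 => ->.
rewrite [xi *: a + _]addrCA.
have [eta etaI ->] := MVT_line b (xi *: a + x) s0 dDphi.
by exists xi, eta; split; rewrite -?in_itv.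
Qed.

Lemma clairaut (phi : E -> R) (a b x : E) :
  (forall y, differentiable phi y) ->
  (forall y, differentiable (fun z => 'D_a phi z) y) ->
  (forall y, differentiable (fun z => 'D_b phi z) y) ->
  continuous (fun y => 'D_b (fun z => 'D_a phi z) y) ->
  continuous (fun y => 'D_a (fun z => 'D_b phi z) y) ->
  'D_b (fun z => 'D_a phi z) x = 'D_a (fun z => 'D_b phi z) x.
Proof.
move=> dphi dDa dDb cA cB.
set A := fun y => _ in cA; set B := fun y => _ in cB; rewrite -/(A x) -/(B x).
apply/eqP; rewrite -subr_eq0 -normr_le0; apply/ler_addgt0Pr => e e0; rewrite add0r.
have e2 : 0 < e / 2 by rewrite divr_gt0.
have /cvgrPdist_lt /(_ _ e2) nearA := cA x.
have /cvgrPdist_lt /(_ _ e2) nearB := cB x.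
have [eps /= eps0 near_x] := iffLR (nbhs_ballP _ _) (filterI nearA nearB).
pose M := `|a| + `|b| + 1.
have M0 : 0 < M by rewrite ltr_pwDr // addr_ge0.
pose s := eps / M.
have s0 : 0 < s by rewrite divr_gt0.
have close (u w : R) (p q : E) : 0 < u < s -> 0 < w < s -> `|p| + `|q| < M ->
    ball x eps (w *: q + (u *: p + x)).
  move=> /andP[u0 us] /andP[w0 ws] pqM.
  rewrite -ball_normE /= addrA opprD addrCA subrr addr0 normrN.
  apply: (le_lt_trans (ler_normD _ _)); rewrite !normrZ !gtr0_norm //.
  apply: (@le_lt_trans _ _ (s * (`|p| + `|q|))).
    by rewrite mulrDr addrC lerD // ler_wpM2r // ltW.
  have -> : eps = s * M by rewrite /s divfK ?gt_eqF.
  by rewrite ltr_pM2l.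
have [xi [eta [xiI etaI Dab]]] := second_difference_MVT b x s0 dphi dDa.
have [xi' [eta' [xiI' etaI' Dba]]] := second_difference_MVT a x s0 dphi dDb.
move: Dab Dba; rewrite -/(A _) -/(B _) => Dab Dba; clearbody A B.
have abM : `|a| + `|b| < M by rewrite ltrDl.
have baM : `|b| + `|a| < M by rewrite addrC.
have [nA _] := near_x _ (close xi eta a b xiI etaI abM).
have [_ nB] := near_x _ (close xi' eta' b a xiI' etaI' baM).
have AB : A (eta *: b + (xi *: a + x)) = B (eta' *: a + (xi' *: b + x)).
  have ss0 : s * s != 0 by rewrite mulf_neq0 // gt_eqF.
  apply: (mulIf ss0); rewrite [LHS]mulrA [RHS]mulrA -Dab -Dba.
  by rewrite [s *: b + (s *: a + x)]addrCA; ring.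
rewrite [leRHS]splitr; apply/ltW/(le_lt_trans _ (ltrD nA nB)).
rewrite [X in _ <= _ + X]distrC -AB.
set Ap := A (eta *: b + _).
have -> : A x - B x = (A x - Ap) + (Ap - B x) by rewrite addrA subrK.
exact: ler_normD.
Qed.

End SecondDerivatives.

Section LieDerivatives.
Variables (R : realType) (n : nat).
Local Notation E := 'rV[R]_n.

Lemma smooth_deriveC (phi : E -> R) (a b x : E) : smooth phi ->
  'D_b (fun z => 'D_a phi z) x = 'D_a (fun z => 'D_b phi z) x.
Proof.
move=> sphi; apply: clairaut => [y|y|y||].
- exact: smooth_differentiable.
- exact/smooth_differentiable/smooth_derive.
- exact/smooth_differentiable/smooth_derive.
- exact: (smooth_derive (W := R^o) b (smooth_derive (W := R^o) a sphi) 0%N).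
- exact: (smooth_derive (W := R^o) a (smooth_derive (W := R^o) b sphi) 0%N).
Qed.

Lemma derive_lie (F : E -> E) (phi : E -> R) v y : smooth F -> smooth phi ->
  'D_v (lie F phi) y = 'D_('D_v F y) phi y + 'D_(F y) (fun z => 'D_v phi z) y.
Proof.
move=> sF sphi.
have dphi z : differentiable phi z by exact: smooth_differentiable.
have dF k z : differentiable (fun x => F x 0 k) z.
  exact/smooth_differentiable/smooth_coord.
have dDphi k z : differentiable (fun x => 'D_('e_k) phi x) z.
  exact/smooth_differentiable/smooth_derive.
have -> : lie F phi = \sum_(k < n) (fun x => F x 0 k * 'D_('e_k) phi x).
  by rewrite fct_sumE; apply/funext => x; rewrite /lie derive_dir_basis.
rewrite derive_sum; last by move=> k; apply: derivableM; exact: diff_derivable.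
rewrite (derive_dir_basis _ (dphi y)).
rewrite (derive_dir_basis _ (smooth_differentiable y (smooth_derive v sphi))).
rewrite -big_split /=; apply: eq_bigr => k _.
rewrite deriveM; try exact: diff_derivable.
rewrite derive_mx ?mxE; last exact/diff_derivable/smooth_differentiable.
rewrite (smooth_deriveC ('e_k) v y sphi) addrC; congr (_ + _); exact: mulrC.
Qed.

Lemma derive_dir_along (phi : E -> R) (X V : R -> E) t :
  smooth phi -> derivable X t 1 -> derivable V t 1 ->
  'D_1 (fun s => 'D_(V s) phi (X s)) t =
    'D_('D_1 V t) phi (X t) + 'D_('D_1 X t) (fun z => 'D_(V t) phi z) (X t).
Proof.
move=> sphi dX dV; rewrite (smooth_deriveC (V t) ('D_1 X t) (X t) sphi).
have dphi z : differentiable phi z by exact: smooth_differentiable.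
have -> : (fun s => 'D_(V s) phi (X s)) =
          \sum_(l < n) (fun s => V s 0 l * 'D_('e_l) phi (X s)).
  by rewrite fct_sumE; apply/funext => s; rewrite derive_dir_basis.
have dVl l : derivable (fun s => V s 0 l) t 1 by exact: (iffLR (derivable_mxP V t 1) dV 0 l).
have dDl l := derive_along_curve (smooth_differentiable (X t) (smooth_derive ('e_l) sphi)) dX.
rewrite derive_sum; last by move=> l; apply: derivableM => //; case: (dDl l).
rewrite (derive_dir_basis _ (dphi _)).
rewrite (derive_dir_basis _ (smooth_differentiable (X t) (smooth_derive ('D_1 X t) sphi))).
rewrite -big_split /=; apply: eq_bigr => l _.
rewrite deriveM //; last by case: (dDl l).
case: (dDl l) => _ /= ->; rewrite (derive_mx dV) mxE.
rewrite (smooth_deriveC ('e_l) ('D_1 X t) (X t) sphi) addrC; congr (_ + _); exact: mulrC.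
Qed.

Lemma derive_dir_along_lifted du (f : E -> E) (g : 'I_du -> E -> E) (u : 'rV[R]_du)
    (phi : E -> R) (X V : R -> E) t :
  smooth f -> (forall j, smooth (g j)) -> smooth phi ->
  derivable X t 1 -> derivable V t 1 ->
  'D_1 X t = f (X t) + \sum_(j < du) u 0 j *: g j (X t) ->
  'D_1 V t = 'D_(V t) f (X t) + \sum_(j < du) u 0 j *: 'D_(V t) (g j) (X t) ->
  'D_1 (fun s => 'D_(V s) phi (X s)) t =
    'D_(V t) (lie f phi) (X t) + \sum_(j < du) u 0 j * 'D_(V t) (lie (g j) phi) (X t).
Proof.
move=> sf sg sphi dX dV DX DV.
have dphi := smooth_differentiable (X t) sphi.
have dDphi := smooth_differentiable (X t) (smooth_derive (V t) sphi).
rewrite derive_dir_along // DX DV !derive_dirD // !derive_dir_sum // derive_lie //.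
under eq_bigr do rewrite derive_dirZ //.
under [X in _ = _ + X]eq_bigr do rewrite derive_lie // mulrDr.
under [X in _ + _ + (_ + X) = _]eq_bigr do rewrite derive_dirZ //.
by rewrite big_split /= addrACA.
Qed.

End LieDerivatives.

Section LipschitzDerivative.
Variables (R : realType) (V W1 W2 : normedModType R).

Lemma lipschitz_derive_eq0 (G : V -> W1) (H : V -> W2) (y v : V) (L : R) (N : set V) :
  nbhs y N -> (forall xa xb, N xa -> N xb -> `|G xa - G xb| <= L * `|H xa - H xb|) ->
  derivable G y v -> derivable H y v -> 'D_v H y = 0 -> 'D_v G y = 0.
Proof.
move=> Ny lipGH dG dH DH0.
have line0 : (fun h : R => h *: v + y) @ 0 --> 0 *: v + y.
  exact: cvgD (cvgZ cvg_id (cvg_cst v)) (cvg_cst y).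
have nearN : \forall h \near 0^', N (h *: v + y).
  by apply: nbhs_dnbhs; apply: line0; rewrite scale0r add0r.
have cG : (fun h : R => h^-1 *: (G (h *: v + y) - G y)) @ 0^' --> 'D_v G y := dG.
have cH : (fun h : R => h^-1 *: (H (h *: v + y) - H y)) @ 0^' --> 'D_v H y := dH.
apply/eqP; rewrite -normr_le0.
rewrite -[leRHS](mulr0 L) -(normr0 W2) -DH0.
apply: ler_cvg_to (cvg_norm cG) (cvgM (cvg_cst L) (cvg_norm cH)) _.
near=> h; rewrite /= !normrZ mulrCA ler_wpM2l //.
by apply: lipGH; [near: h | exact: nbhs_singleton].
Unshelve. all: by end_near.
Qed.

End LipschitzDerivative.

Section RowDerivative.
Variables (R : realType) (V : normedModType R) (m : nat).

Lemma derivable_row (phi : 'I_m -> V -> R) y v :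
  (forall k, derivable (phi k) y v) -> derivable (fun x => \row_k phi k x) y v.
Proof.
move=> dphi; apply/derivable_mxP => i k.
by rewrite (_ : (fun x => _) = phi k) //; apply/funext => x; rewrite mxE.
Qed.

Lemma derive_row (phi : 'I_m -> V -> R) y v : (forall k, derivable (phi k) y v) ->
  'D_v (fun x => \row_k phi k x) y = \row_k 'D_v (phi k) y.
Proof.
move=> dphi; rewrite derive_mx; last exact: derivable_row.
apply/rowP => k; rewrite !mxE.
by rewrite (_ : (fun x => _) = phi k) //; apply/funext => x; rewrite mxE.
Qed.

End RowDerivative.

Section ZeroOnInterval.
Variables (R : realType) (W : normedModType R).

Lemma derive_eq0_itv (F : R -> W) (a b t : R) :
  (forall s, a < s < b -> F s = 0) -> a < t < b -> 'D_1 F t = 0.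
Proof.
move=> F0 tab; have tI : t \in `]a, b[%R by rewrite in_itv.
rewrite (@near_eq_derive _ _ _ _ (cst 0)) ?derive_cst //.
by apply: filterS (near_in_itvoo tI) => s; rewrite in_itv => /F0.
Qed.

Lemma within_continuous_start (Y : R -> W) (T : R) (P : set W) :
  {within [set t | 0 <= t < T], continuous Y} -> 0 < T -> nbhs (Y 0) P ->
  exists2 e, 0 < e <= T & forall s, 0 <= s < e -> P (Y s).
Proof.
move=> cY T0 PY0.
have T0I : [set t : R | 0 <= t < T] 0 by rewrite /= lexx T0.
have := (iffLR (subspace_continuousP _ _) cY) 0 T0I P PY0.
move=> /(iffLR (nbhs_ballP _ _)) [eps /= eps0 nearP].
exists (Num.min eps T); first by rewrite lt_min eps0 T0 ge_min lexx orbT.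
move=> s /andP[s0 se]; move: se; rewrite lt_min => /andP[seps sT]; apply: nearP.
  by rewrite -ball_normE /= sub0r normrN ger0_norm.
by rewrite /= s0 sT.
Qed.

Lemma within_continuous_start_eq0 (Y : R -> W) (T e : R) :
  {within [set t | 0 <= t < T], continuous Y} -> 0 < T -> 0 < e ->
  (forall t, 0 < t < e -> Y t = 0) -> Y 0 = 0.
Proof.
move=> cY T0 e0 Y0; apply/eqP; rewrite -normr_le0.
apply/ler_addgt0Pr => eps eps0; rewrite add0r.
have [e' /andP[e'0 _] near0] := within_continuous_start cY T0 (nbhsx_ballx (Y 0) eps eps0).
pose s := Num.min e e' / 2.
have m0 : 0 < Num.min e e' by rewrite lt_min e0 e'0.
have [s0 sm] : 0 < s /\ s < Num.min e e' by rewrite divr_gt0 // ltr_pdivrMr // ltr_pMr // ltr1n.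
move: sm; rewrite lt_min => /andP[se se'].
have Ys0 : Y s = 0 by apply: Y0; rewrite s0 se.
have := near0 s; rewrite (ltW s0) se' Ys0 => /(_ isT).
by rewrite -ball_normE /= subr0 => /ltW.
Qed.

End ZeroOnInterval.

Section Observability.
Variables (R : realType) (dx du d_o : nat).
Local Notation E := 'rV[R]_dx.
Variables (f : E -> E) (g : 'I_du -> E -> E) (h : E -> R) (S : set E).
Hypotheses (sf : smooth f) (sg : forall j, smooth (g j)) (sh : smooth h).

Definition lieG_lipschitz_on : Prop :=
  forall i : nat, (1 <= i <= d_o)%N -> forall x, S x ->
    exists L : R, 0 < L /\
    exists N : set E, nbhs x N /\
      forall xa xb, N xa -> N xb ->
        `| lieG g (lieN f i.-1 h) xa - lieG g (lieN f i.-1 h) xb |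
          <= L * `| Hmap f h i xa - Hmap f h i xb |.

Hypothesis lieG_lipschitz : lieG_lipschitz_on.

Lemma derivable_Hmap i y v : derivable (Hmap f h i) y v.
Proof.
by apply: derivable_row => k; apply/diff_derivable/smooth_differentiable/smooth_lieN.
Qed.

Lemma derive_Hmap i y v : 'D_v (Hmap f h i) y = \row_(k < i) 'D_v (lieN f k h) y.
Proof.
by apply: derive_row => k; apply/diff_derivable/smooth_differentiable/smooth_lieN.
Qed.

Lemma derive_lieG_eq0 k y v : S y -> (k < d_o)%N ->
  (forall i, (i <= k)%N -> 'D_v (lieN f i h) y = 0) ->
  forall j, 'D_v (lie (g j) (lieN f k h)) y = 0.
Proof.
move=> Sy kd Dv0 j.
have sphi := smooth_lieN k sf sh.
have dlie j' : derivable (lie (g j') (lieN f k h)) y v.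
  exact/diff_derivable/smooth_differentiable/smooth_lie.
have [L [_ [N [Ny lipN]]]] := @lieG_lipschitz k.+1 kd y Sy.
have dH : derivable (Hmap f h k.+1) y v by exact: derivable_Hmap.
have DH0 : 'D_v (Hmap f h k.+1) y = 0.
  by rewrite derive_Hmap; apply/rowP => i; rewrite !mxE Dv0 // -ltnS.
have /rowP/(_ j) := lipschitz_derive_eq0 Ny lipN (derivable_row dlie) dH DH0.
by rewrite derive_row // !mxE.
Qed.

Variables (T : R) (u : R -> 'rV[R]_du) (X V : R -> E).
Hypothesis lifted_ode : forall t, 0 < t < T ->
  [/\ derivable X t 1,
      'D_1 X t = f (X t) + \sum_(j < du) (u t) ord0 j *: g j (X t),
      derivable V t 1 &
      'D_1 V t = 'D_(V t) f (X t) + \sum_(j < du) (u t) ord0 j *: 'D_(V t) (g j) (X t)].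
Hypothesis X_in_S : forall t, 0 < t < T -> S (X t).
Hypothesis output_eq0 : forall t, 0 < t < T -> 'D_(V t) h (X t) = 0.

Lemma derive_lieN_eq0 k : (k < d_o)%N ->
  forall t, 0 < t < T -> 'D_(V t) (lieN f k h) (X t) = 0.
Proof.
suff : forall i, (i <= k)%N -> (k < d_o)%N -> forall t, 0 < t < T ->
    'D_(V t) (lieN f i h) (X t) = 0 by apply.
elim: k => [|k IH] i ik kd t tT.
  by move: ik; rewrite leqn0 => /eqP ->; exact: output_eq0.
move: ik; rewrite leq_eqVlt => /orP[/eqP -> | ik]; last exact: IH ik (ltnW kd) t tT.
have [dX DX dV DV] := lifted_ode tT.
have Dw0 : 'D_1 (fun s => 'D_(V s) (lieN f k h) (X s)) t = 0.
  by apply: derive_eq0_itv tT => s sT; exact: IH k (leqnn k) (ltnW kd) s sT.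
have Dg0 j : 'D_(V t) (lie (g j) (lieN f k h)) (X t) = 0.
  by apply: derive_lieG_eq0 (X_in_S tT) (ltnW kd) _ j => m mk; exact: IH m mk (ltnW kd) t tT.
move: Dw0; rewrite (derive_dir_along_lifted sf sg (smooth_lieN k sf sh) dX dV DX DV).
by rewrite big1 ?addr0 // => j _; rewrite Dg0 mulr0.
Qed.

Lemma lifted_V_eq0 : immersion_on S (Hmap f h d_o) ->
  forall t, 0 < t < T -> V t = 0.
Proof.
move=> imm t tT; have [dH dH_inj] := imm _ (X_in_S tT).
apply: dH_inj; rewrite -deriveE // derive_Hmap.
by apply/rowP => k; rewrite !mxE derive_lieN_eq0.
Qed.

End Observability.

Theorem proposition5 (R : realType) (dx du d_o : nat)
  (f : 'rV[R]_dx -> 'rV[R]_dx) (g : 'I_du -> 'rV[R]_dx -> 'rV[R]_dx)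
  (h : 'rV[R]_dx -> R) (S : set 'rV[R]_dx) :
  smooth f -> (forall j, smooth (g j)) -> smooth h ->
  open S ->
  immersion_on S (Hmap f h d_o) ->
  (forall i : nat, (1 <= i <= d_o)%N -> forall x, S x ->
     exists L : R, 0 < L /\
     exists N : set 'rV[R]_dx, nbhs x N /\
       forall xa xb, N xa -> N xb ->
         `| lieG g (lieN f i.-1 h) xa - lieG g (lieN f i.-1 h) xb |
           <= L * `| Hmap f h i xa - Hmap f h i xb |) ->
  unif_inf_observable f g h S.
Proof.
move=> sf sg sh oS imm lipG x v Sx v0 T T0 u _ X V [X0 [V0 [cX [cV ode]]]].
apply: contrapT => never_observed.
have SX0 : nbhs (X 0) S by rewrite X0; exact: oS.
have [T1 /andP[T10 T1T] XS] := within_continuous_start cX T0 SX0.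
have tT t : 0 < t < T1 -> 0 < t < T by case/andP=> t0 tT1; rewrite t0 (lt_le_trans tT1).
have XS1 t : 0 < t < T1 -> S (X t) by case/andP=> t0 tT1; apply: XS; rewrite ltW.
have w0 t : 0 < t < T1 -> 'D_(V t) h (X t) = 0.
  move=> tT1; apply/eqP/negPn/negP => wt; apply: never_observed.
  exists t; split=> //; first by case/andP: (tT t tT1) => t0 ->; rewrite ltW.
  by move=> s /andP[s0 st]; apply: XS; rewrite s0 (le_lt_trans st); case/andP: tT1.
have V_eq0 := lifted_V_eq0 sf sg sh lipG (fun t tT1 => ode t (tT t tT1)) XS1 w0 imm.
by move: v0; rewrite -V0 (within_continuous_start_eq0 cV T0 T10 V_eq0) eqxx.
Qed.
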